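(* Let $X$ be a finitely supported subset of an invariant set such that $\wp_{fs}(X)$ is not FSM Dedekind infinite. Then every finitely supported surjective map $f:X\to X$ is injective.
   Context: Framework (FSM). Work in ZF with a fixed infinite set $A$ of atoms; $S_A$ is the group of bijections of $A$ fixing all but finitely many atoms; $Fix(S)$ is the set of $\pi\in S_A$ fixing each element of $S\subseteq A$; $S$ supports $x$ if $\pi\cdot x=x$ for all $\pi\in Fix(S)$. An invariant set is an $S_A$-set all of whose elements have finite supports; subsets carry $\pi\star Z=\{\pi\cdot z:z\in Z\}$; $\wp_{fs}(X)$ is the set of finitely supported subsets (under $\star$) of the ambient invariant set contained in $X$. A function is finitely supported if there is a finite $S$ such that for all $\pi\in Fix(S)$, $\pi$ preserves domain and codomain and $f(\pi\cdot x)=\pi\cdot f(x)$. A set $Z$ is FSM Dedekind infinite if there is a finitely supported injection from $Z$ onto a finitely supported proper subset of $Z$. *)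

From Stdlib Require Import List.
Set Implicit Arguments.

Definition infinite_type (A : Type) : Prop :=
  exists e : nat -> A, forall m n, e m = e n -> m = n.

Definition finperm (A : Type) (p : A -> A) : Prop :=
  (exists q : A -> A, (forall a, q (p a) = a) /\ (forall a, p (q a) = a)) /\
  (exists l : list A, forall a, ~ In a l -> p a = a).

Definition fixes (A : Type) (S : list A) (p : A -> A) : Prop :=
  forall a, In a S -> p a = a.

Definition supports (A T : Type) (act : (A -> A) -> T -> T) (S : list A) (x : T) : Prop :=
  forall p, finperm p -> fixes S p -> act p x = x.

Record InvSet (A : Type) := {
  carrier :> Type;
  act : (A -> A) -> carrier -> carrier;
  act_id : forall x, act (fun a => a) x = x;
  act_comp : forall p q x, finperm p -> finperm q ->
      act (fun a => p (q a)) x = act p (act q x);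
  act_fin_supp : forall x, exists S : list A, supports act S x
}.

Definition setact (A T : Type) (act : (A -> A) -> T -> T) (p : A -> A) (Z : T -> Prop)
  : T -> Prop := fun y => exists z, Z z /\ y = act p z.

Definition fs_set (A T : Type) (act : (A -> A) -> T -> T) (Z : T -> Prop) : Prop :=
  exists S : list A, supports (setact act) S Z.

(* wp_fs(X): finitely supported subsets of the ambient set contained in X;
   itself a subset of T -> Prop (acted on by setact). *)
Definition pfs (A T : Type) (act : (A -> A) -> T -> T) (X : T -> Prop) : (T -> Prop) -> Prop :=
  fun Z => fs_set act Z /\ (forall z, Z z -> X z).

Definition fs_fun (A T1 T2 : Type) (act1 : (A -> A) -> T1 -> T1)
  (act2 : (A -> A) -> T2 -> T2) (D : T1 -> Prop) (C : T2 -> Prop) (f : T1 -> T2) : Prop :=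
  exists S : list A, forall p, finperm p -> fixes S p ->
    setact act1 p D = D /\ setact act2 p C = C /\
    (forall x, D x -> f (act1 p x) = act2 p (f x)).

Definition fsm_dedekind_infinite (A T : Type) (act : (A -> A) -> T -> T) (Z : T -> Prop) : Prop :=
  exists (Y : T -> Prop) (g : T -> T),
    fs_set act Y /\
    (forall y, Y y -> Z y) /\ (exists z, Z z /\ ~ Y z) /\
    (forall x, Z x -> Y (g x)) /\
    (forall x y, Z x -> Z y -> g x = g y -> x = y) /\
    (forall y, Y y -> exists x, Z x /\ g x = y) /\
    fs_fun act act Z Y g.

From Stdlib Require Import List.
From Stdlib Require Import Classical FunctionalExtensionality PropExtensionality.
Set Implicit Arguments.

(* Suppose f : X -> X is finitely supported and surjective but
   f x = f y for some x <> y.  Call W ⊆ X saturated if it is a union of fibres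
   of f.  The preimage map  V |-> f^-1(V)  sends wp_fs(X) injectively (because
   f(f^-1(V)) = V by surjectivity) onto the family Y of finitely supported
   saturated subsets of X (because W = f^-1(f(W)) for saturated W), and Y is a
   proper subfamily since the singleton {x} is not saturated.  Everything is
   supported by a support S of f (which, by the definition of finitely
   supported maps, supports the domain X as well), so wp_fs(X) is FSM
   Dedekind infinite. *)

Lemma pred_ext (T : Type) (P Q : T -> Prop) : (forall x, P x <-> Q x) -> P = Q.
Proof.
  intro H; extensionality x; apply propositional_extensionality; apply H.
Qed.

Lemma finperm_inv (A : Type) (p : A -> A) : finperm p -> exists q, finperm q /\
  (forall a, q (p a) = a) /\ (forall a, p (q a) = a) /\ (forall S, fixes S p -> fixes S q).
Proof.
  intros [[q [Hqp Hpq]] [l Hl]]. exists q. repeat split; auto.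
  - exists p; split; auto.
  - exists l; intros a Ha. rewrite <- (Hl a Ha) at 1. apply Hqp.
  - intros S HS a Ha. rewrite <- (HS a Ha) at 1. apply Hqp.
Qed.

Lemma finperm_comp (A : Type) (p r : A -> A) :
  finperm p -> finperm r -> finperm (fun a => p (r a)).
Proof.
  intros [[qp [Hp1 Hp2]] [l1 Hl1]] [[qr [Hr1 Hr2]] [l2 Hl2]]. split.
  - exists (fun a => qr (qp a)). split; intro a; [rewrite Hp1 | rewrite Hr2]; auto.
  - exists (l1 ++ l2). intros a Ha.
    rewrite Hl2, Hl1; auto; intro; apply Ha; apply in_or_app; auto.
Qed.

Lemma fixes_app (A : Type) (S1 S2 : list A) p :
  fixes (S1 ++ S2) p -> fixes S1 p /\ fixes S2 p.
Proof. intro H; split; intros a Ha; apply H; apply in_or_app; auto. Qed.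

Definition invertible_action (A T : Type) (ac : (A -> A) -> T -> T) : Prop :=
  forall p, finperm p -> exists q, finperm q /\ (forall S, fixes S p -> fixes S q) /\
    (forall x, ac p (ac q x) = x) /\ (forall x, ac q (ac p x) = x).

Lemma mem_setact (A T : Type) (ac : (A -> A) -> T -> T) p q (Z : T -> Prop) z :
  (forall x, ac p (ac q x) = x) -> (forall x, ac q (ac p x) = x) ->
  (setact ac p Z z <-> Z (ac q z)).
Proof.
  intros Hpq Hqp; split.
  - intros [w [Hw ->]]. rewrite Hqp; exact Hw.
  - intro Hz. exists (ac q z). split; auto.
Qed.
Arguments mem_setact {A T ac p q Z z}.

Lemma invertible_setact (A T : Type) (ac : (A -> A) -> T -> T) :
  invertible_action ac -> invertible_action (setact ac).
Proof.
  intros Hac p Hp. destruct (Hac p Hp) as [q [Hq [Hfix [Hpq Hqp]]]].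
  exists q; split; [exact Hq | split; [exact Hfix | split]];
    intro Z; apply pred_ext; intro z.
  - rewrite (mem_setact Hpq Hqp), (mem_setact Hqp Hpq), Hpq. tauto.
  - rewrite (mem_setact Hqp Hpq), (mem_setact Hpq Hqp), Hqp. tauto.
Qed.

(* Since Fix(S) is closed under inverses, S supports Z as soon as Z is
   stable under every permutation of Fix(S). *)
Lemma supports_intro (A T : Type) (ac : (A -> A) -> T -> T) S (Z : T -> Prop) :
  invertible_action ac ->
  (forall p, finperm p -> fixes S p -> forall z, Z z -> Z (ac p z)) ->
  supports (setact ac) S Z.
Proof.
  intros Hac Hstab p Hp Hf. destruct (Hac p Hp) as [q [Hq [Hfix [Hpq Hqp]]]].
  apply pred_ext; intro z. rewrite (mem_setact Hpq Hqp). split; intro Hz.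
  - rewrite <- (Hpq z). apply Hstab; auto.
  - apply Hstab; auto.
Qed.

Lemma supports_mem (A T : Type) (ac : (A -> A) -> T -> T) S (Z : T -> Prop) p z :
  supports (setact ac) S Z -> finperm p -> fixes S p -> Z z -> Z (ac p z).
Proof. intros HS Hp Hf Hz. rewrite <- (HS p Hp Hf). exists z; auto. Qed.
Arguments supports_mem {A T ac S Z p z}.

Section FinitelySupportedSets.
Variables (A : Type) (U : InvSet A).

Lemma act_cancel p q x : finperm p -> finperm q ->
  (forall a, p (q a) = a) -> act U p (act U q x) = x.
Proof.
  intros Hp Hq Hpq. rewrite <- act_comp by assumption.
  replace (fun a => p (q a)) with (fun a : A => a) by (extensionality a; auto).
  apply act_id.
Qed.

Lemma invertible_act : invertible_action (act U).
Proof.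
  intros p Hp. destruct (finperm_inv Hp) as [q [Hq [Hqp [Hpq Hfix]]]].
  exists q; split; [exact Hq | split; [exact Hfix | split]];
    intro x; apply act_cancel; auto.
Qed.

(* A translate p * W of a finitely supported set is finitely supported
   (by the image of a support of W under p). *)
Lemma fs_set_setact (W : U -> Prop) p :
  fs_set (act U) W -> finperm p -> fs_set (act U) (setact (act U) p W).
Proof.
  intros [S HS] Hp. destruct (finperm_inv Hp) as [q [Hq [Hqp [Hpq _]]]].
  exists (map p S). apply supports_intro; [apply invertible_act|].
  intros r Hr Hfix z [w [Hw ->]].
  set (c := fun a => q (r (p a))).
  assert (Hrp : finperm (fun a => r (p a))) by (apply finperm_comp; auto).
  assert (Hc : finperm c) by (unfold c; apply finperm_comp; auto).
  exists (act U c w). split.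
  - apply (supports_mem HS); auto.
    intros a Ha. unfold c. rewrite (Hfix (p a)); auto. apply in_map; auto.
  - unfold c. rewrite (act_comp U w Hq Hrp), (act_comp U w Hr Hp).
    symmetry; apply act_cancel; auto.
Qed.

(* Singletons are finitely supported, since every element is. *)
Lemma fs_set_singleton (x : U) : fs_set (act U) (fun z => z = x).
Proof.
  destruct (act_fin_supp U x) as [S HS]. exists S.
  apply supports_intro; [apply invertible_act|]. intros p Hp Hf z ->. auto.
Qed.

Lemma supports_pfs S (X : U -> Prop) :
  supports (setact (act U)) S X -> supports (setact (setact (act U))) S (pfs (act U) X).
Proof.
  intros HX. apply supports_intro; [apply invertible_setact, invertible_act|].
  intros p Hp Hf W [HW Wsub]. split.
  - apply fs_set_setact; auto.
  - intros z [w [Hw ->]]. apply (supports_mem HX); auto.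
Qed.

Section Preimages.
Variables (X : U -> Prop) (f : U -> U) (S : list A).
Hypothesis X_supp : supports (setact (act U)) S X.
Hypothesis f_equiv :
  forall p, finperm p -> fixes S p -> forall x, X x -> f (act U p x) = act U p (f x).

Definition preimage (V : U -> Prop) : U -> Prop := fun z => X z /\ V (f z).
Definition image (W : U -> Prop) : U -> Prop := fun v => exists u, W u /\ f u = v.
Definition saturated (W : U -> Prop) : Prop :=
  forall u v, X u -> X v -> f u = f v -> W u -> W v.

Lemma fs_set_preimage V : fs_set (act U) V -> fs_set (act U) (preimage V).
Proof.
  intros [SV HSV]. exists (SV ++ S). apply supports_intro; [apply invertible_act|].
  intros p Hp Hfix z [Hz Hv]. destruct (fixes_app _ _ Hfix) as [HfV HfS].
  split; [apply (supports_mem X_supp); auto|].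
  rewrite f_equiv; auto. apply (supports_mem HSV); auto.
Qed.

Lemma fs_set_image W : fs_set (act U) W -> (forall z, W z -> X z) ->
  fs_set (act U) (image W).
Proof.
  intros [SW HSW] Wsub. exists (SW ++ S). apply supports_intro; [apply invertible_act|].
  intros p Hp Hfix z [u [Hu <-]]. destruct (fixes_app _ _ Hfix) as [HfW HfS].
  exists (act U p u). split; [apply (supports_mem HSW) | apply f_equiv]; auto.
Qed.

Lemma preimage_equivariant p V : finperm p -> fixes S p ->
  preimage (setact (act U) p V) = setact (act U) p (preimage V).
Proof.
  intros Hp Hf. destruct (invertible_act Hp) as [q [Hq [Hfix [Hpq Hqp]]]].
  apply pred_ext; intro z. unfold preimage.
  rewrite !(mem_setact Hpq Hqp).
  assert (HXq : X (act U q z) <-> X z).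
  { split; intro H; [rewrite <- (Hpq z) | ]; apply (supports_mem X_supp); auto. }
  cbv beta. split; intros [Hz Hv]; split.
  - apply HXq; exact Hz.
  - rewrite f_equiv; auto.
  - apply HXq; exact Hz.
  - rewrite f_equiv in Hv; auto. apply HXq; exact Hz.
Qed.

Lemma supports_saturated_family :
  supports (setact (setact (act U))) S (fun W => pfs (act U) X W /\ saturated W).
Proof.
  apply supports_intro; [apply invertible_setact, invertible_act|].
  intros p Hp Hf W [HW Wsat]. split; [apply (supports_mem (supports_pfs X_supp)); auto|].
  destruct (invertible_act Hp) as [q [Hq [Hfix [Hpq Hqp]]]].
  intros u v Hu Hv Huv. rewrite !(mem_setact Hpq Hqp).
  apply Wsat; try (apply (supports_mem X_supp); auto).
  rewrite !f_equiv, Huv; auto.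
Qed.

Lemma image_preimage V :
  (forall y, X y -> exists x, X x /\ f x = y) -> (forall z, V z -> X z) ->
  image (preimage V) = V.
Proof.
  intros Hsurj Vsub. apply pred_ext; intro z; split.
  - intros [u [[_ Hu] <-]]. exact Hu.
  - intro Hz. destruct (Hsurj z (Vsub z Hz)) as [u [Hu <-]]. exists u; repeat split; auto.
Qed.

Lemma preimage_image W : (forall z, W z -> X z) -> saturated W ->
  preimage (image W) = W.
Proof.
  intros Wsub Wsat. apply pred_ext; intro z; split.
  - intros [Hz [u [Hu Hfu]]]. apply Wsat with u; auto.
  - intro Hz. split; auto. exists z; auto.
Qed.

Lemma noninjective_pfs_dedekind_infinite x y :
  (forall z, X z -> X (f z)) -> (forall z, X z -> exists u, X u /\ f u = z) ->
  X x -> X y -> f x = f y -> x <> y ->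
  fsm_dedekind_infinite (setact (act U)) (pfs (act U) X).
Proof.
  intros Hmaps Hsurj Hx Hy Hxy Hne.
  exists (fun W => pfs (act U) X W /\ saturated W), preimage.
  split; [exists S; apply supports_saturated_family|].
  split; [intros W [HW _]; exact HW|].
  split.
  { (* the singleton {x} is not saturated, as y lies in the fibre of x *)
    exists (fun z => z = x). split.
    - split; [apply fs_set_singleton | intros z ->; exact Hx].
    - intros [_ Hsat]. apply Hne. symmetry. apply (Hsat x y); auto. }
  split.
  {
    intros V [HV Vsub]. split; [split|].
    - apply fs_set_preimage; exact HV.
    - intros z [Hz _]; exact Hz.
    - intros u v Hu Hv Huv [_ Hfu]. split; [exact Hv | rewrite <- Huv; exact Hfu]. }
  split.
  {
    intros V W [_ Vsub] [_ Wsub] HVW.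
    rewrite <- (image_preimage V Hsurj Vsub), <- (image_preimage W Hsurj Wsub), HVW.
    reflexivity. }
  split.
  {
    intros W [[HW Wsub] Wsat]. exists (image W). split; [split|].
    - apply fs_set_image; assumption.
    - intros z [u [Hu <-]]. apply Hmaps, Wsub, Hu.
    - apply preimage_image; assumption. }
  exists S. intros p Hp Hf. split; [|split].
  - apply (supports_pfs X_supp); assumption.
  - apply supports_saturated_family; assumption.
  - intros V _. apply preimage_equivariant; assumption.
Qed.

End Preimages.
End FinitelySupportedSets.

Theorem mainTheorem13 (A : Type) (HA : infinite_type A) (U : InvSet A)
  (X : U -> Prop) (HX : fs_set (act U) X)
  (HP : ~ fsm_dedekind_infinite (setact (act U)) (pfs (act U) X))
  (f : U -> U) (Hmaps : forall x, X x -> X (f x))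
  (Hfs : fs_fun (act U) (act U) X X f)
  (Hsurj : forall y, X y -> exists x, X x /\ f x = y) :
  forall x y, X x -> X y -> f x = f y -> x = y.
Proof.
  intros x y Hx Hy Hxy.
  destruct (classic (x = y)) as [Heq | Hne]; [exact Heq | exfalso; apply HP].
  (* a support S of f supports X (its domain) and makes f equivariant *)
  destruct Hfs as [S HS].
  assert (X_supp : supports (setact (act U)) S X) by (intros p Hp Hf; apply (HS p Hp Hf)).
  apply (@noninjective_pfs_dedekind_infinite A U X f S X_supp) with x y; auto.
  intros p Hp Hf. apply (HS p Hp Hf).
Qed.
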